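(* Consider a two-hop amplify-and-forward network with a source, a destination and $K$ energy-harvesting relays $R_1,\dots,R_K$, each with a battery, operating over time slots $t=1,2,\dots$. In slot $t$ the source transmits with power $P$; relay $R_k$ splits its received power $P|h_k(t)|^2$ with ratios $\lambda_{k,I}(t),\lambda_{k,F}(t),\lambda_{k,B}(t)\ge0$, $\lambda_{k,I}(t)+\lambda_{k,F}(t)+\lambda_{k,B}(t)=1$: fraction $\lambda_{k,I}(t)$ is used for information (then corrupted by noise of variance $\sigma_b^2>0$), fraction $\lambda_{k,F}(t)$ is harvested for immediate forwarding, giving power $\eta_1\lambda_{k,F}(t)P|h_k(t)|^2$, and fraction $\lambda_{k,B}(t)$ charges the battery, adding energy $\eta_1\eta_2\lambda_{k,B}(t)P|h_k(t)|^2$, where $\eta_1,\eta_2\in(0,1]$. The relay additionally discharges $b_{k,F}(t)$ with $0\le b_{k,F}(t)\le B_k(t)$ from its battery, where $B_k(t)$ is the battery level at the start of slot $t$, and transmits with power $p_{k,R}(t)=\eta_1\lambda_{k,F}(t)P|h_k(t)|^2+b_{k,F}(t)$; the battery evolves as $B_k(t+1)=B_k(t)+\eta_1\eta_2\lambda_{k,B}(t)P|h_k(t)|^2-b_{k,F}(t)$. With amplification gain $\beta_k(t)=\sqrt{p_{k,R}(t)/(\lambda_{k,I}(t)P|h_k(t)|^2+\sigma_b^2)}$ and phase-aligned distributed beamforming, the SNR at the destination in slot $t$ is $$SNR(t)=\frac{P\Big(\sum_{k=1}^K\beta_k(t)|h_k(t)g_k(t)|\sqrt{\lambda_{k,I}(t)}\Big)^2}{\sum_{k=1}^K\beta_k(t)^2|g_k(t)|^2\sigma_b^2+\sigma_D^2},$$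 with $\sigma_D^2>0$. In the greedy method, at each slot $t$ the decision $(\lambda_{k,I}(t),\lambda_{k,F}(t),\lambda_{k,B}(t),b_{k,F}(t))_{k}$ is chosen to maximize $\tfrac12\log(1+SNR(t))$ given the current battery levels $B_k(t)$, ignoring the effect on later slots. If all batteries are empty initially ($B_k(1)=0$ for all $k$), then the greedy-optimized joint power-splitting and battery operation design uses up the harvested energy at each transmission: $\lambda_{k,B}(t)=0$ and $b_{k,F}(t)=0$ for all $k$ and all $t$, and all batteries remain empty.
   Context: $h_k(t)$ and $g_k(t)$ are the complex source–relay and relay–destination channel gains in slot $t$; $\eta_1$ is the RF-to-DC conversion efficiency and $\eta_2$ the battery storage efficiency. Antenna noise is neglected. Battery energies take values in a discrete set of levels, which does not affect the statement since no charging/discharging occurs. *)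

From Stdlib Require Import Reals List.
From Coquelicot Require Import Coquelicot.
Open Scope R_scope.

(* rsum K f = f 0 + ... + f (K-1); relays R_1..R_K are indexed 0..K-1. *)
Definition rsum (K : nat) (f : nat -> R) : R :=
  fold_right Rplus 0 (map f (seq 0 K)).

Record decision := mkDecision {
  lamI : R;
  lamF : R;
  lamB : R;
  bF   : R
}.

Definition feasible (Bk : R) (d : decision) : Prop :=
  0 <= lamI d /\ 0 <= lamF d /\ 0 <= lamB d /\
  lamI d + lamF d + lamB d = 1 /\ 0 <= bF d <= Bk.

Definition relay_power (eta1 P : R) (h : C) (d : decision) : R :=
  eta1 * lamF d * P * (Cmod h) ^ 2 + bF d.

Definition amp_gain (eta1 P sb2 : R) (h : C) (d : decision) : R :=
  sqrt (relay_power eta1 P h d / (lamI d * P * (Cmod h) ^ 2 + sb2)).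

Definition SNR (K : nat) (P eta1 sb2 sD2 : R) (h g : nat -> C)
    (d : nat -> decision) : R :=
  P * (rsum K (fun k => amp_gain eta1 P sb2 (h k) (d k) * Cmod (h k * g k)
                         * sqrt (lamI (d k)))) ^ 2
  / (rsum K (fun k => (amp_gain eta1 P sb2 (h k) (d k)) ^ 2 * (Cmod (g k)) ^ 2 * sb2)
     + sD2).

Definition rate (K : nat) (P eta1 sb2 sD2 : R) (h g : nat -> C)
    (d : nat -> decision) : R :=
  / 2 * ln (1 + SNR K P eta1 sb2 sD2 h g d).

Definition battery_next (eta1 eta2 P : R) (h : C) (Bk : R) (d : decision) : R :=
  Bk + eta1 * eta2 * lamB d * P * (Cmod h) ^ 2 - bF d.

(* A greedy trajectory: slots t = 1, 2, ...; h t k, g t k channel gains of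
   relay k in slot t; D t k the decision of relay k in slot t; B t k the
   battery level of relay k at the start of slot t. *)
Definition greedy_trajectory (K : nat) (P eta1 eta2 sb2 sD2 : R)
    (h g : nat -> nat -> C) (D : nat -> nat -> decision) (B : nat -> nat -> R) : Prop :=
  (forall t k, (1 <= t)%nat -> (k < K)%nat ->
     B (S t) k = battery_next eta1 eta2 P (h t k) (B t k) (D t k)) /\
  (forall t, (1 <= t)%nat ->
     (forall k, (k < K)%nat -> feasible (B t k) (D t k)) /\
     (forall d' : nat -> decision,
        (forall k, (k < K)%nat -> feasible (B t k) (d' k)) ->
        rate K P eta1 sb2 sD2 (h t) (g t) d' <= rate K P eta1 sb2 sD2 (h t) (g t) (D t))).

From Stdlib Require Import Reals List Lra Lia Psatz.
From Coquelicot Require Import Coquelicot.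
Open Scope R_scope.

(** By induction on the slots, it suffices to show that a greedy decision
    taken with empty batteries never charges: discharging is then impossible
    and the batteries stay empty.  If some relay [k] charged, [lamB > 0], its
    decision could be strictly improved while keeping the others fixed.  If
    [k] forwards ([lamF > 0]), the battery share can be spread over the
    information and forwarding shares so that the gain [beta_k] is unchanged
    while [lamI] grows: the SNR numerator increases and its denominator does
    not.  If [k] does not forward, [beta_k = 0] and relay [k] contributes
    nothing; forwarding a small enough share adds a positive term to the
    numerator sum that outweighs the added noise. *)

Lemma fold_right_Rplus_init (l : list R) (x : R) :
  fold_right Rplus x l = fold_right Rplus 0 l + x.
Proof. induction l as [|a l IH]; simpl; [lra | rewrite IH; lra]. Qed.

Lemma rsum_S (K : nat) (f : nat -> R) : rsum (S K) f = rsum K f + f K.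
Proof.
  unfold rsum. rewrite seq_S, map_app, fold_right_app. simpl.
  rewrite fold_right_Rplus_init. lra.
Qed.

Lemma rsum_ext (K : nat) (f f' : nat -> R) :
  (forall j, (j < K)%nat -> f j = f' j) -> rsum K f = rsum K f'.
Proof.
  induction K as [|K IH]; intros Hff'; [reflexivity|].
  rewrite !rsum_S, IH, (Hff' K) by (auto; intros; apply Hff'; lia). reflexivity.
Qed.

Lemma rsum_nonneg (K : nat) (f : nat -> R) :
  (forall j, (j < K)%nat -> 0 <= f j) -> 0 <= rsum K f.
Proof.
  induction K as [|K IH]; intros Hf; [unfold rsum; simpl; lra|].
  rewrite rsum_S.
  assert (0 <= f K) by (apply Hf; lia).
  assert (0 <= rsum K f) by (apply IH; intros; apply Hf; lia).
  lra.
Qed.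

Definition drop_at (k : nat) (f : nat -> R) : nat -> R :=
  fun j => if Nat.eq_dec j k then 0 else f j.

Lemma rsum_drop_at (K k : nat) (f : nat -> R) :
  (k < K)%nat -> rsum K f = rsum K (drop_at k f) + f k.
Proof.
  induction K as [|K IH]; intros Hk; [lia|].
  rewrite !rsum_S. unfold drop_at at 2.
  destruct (Nat.eq_dec K k) as [->|HKk].
  - rewrite (rsum_ext k (drop_at k f) f); [lra|].
    intros j Hj. unfold drop_at. destruct (Nat.eq_dec j k); [lia | reflexivity].
  - rewrite IH by lia. lra.
Qed.

Lemma rsum_drop_at_ext (K k : nat) (f f' : nat -> R) :
  (forall j, j <> k -> f j = f' j) -> rsum K (drop_at k f) = rsum K (drop_at k f').
Proof.
  intros Hff'. apply rsum_ext. intros j _. unfold drop_at.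
  destruct (Nat.eq_dec j k); auto.
Qed.

Lemma rsum_drop_at_nonneg (K k : nat) (f : nat -> R) :
  (forall j, 0 <= f j) -> 0 <= rsum K (drop_at k f).
Proof.
  intros Hf. apply rsum_nonneg. intros j _. unfold drop_at.
  destruct (Nat.eq_dec j k); [lra | apply Hf].
Qed.

Lemma Rdiv_lt_num_sqr (P S x x' D : R) :
  0 < P -> 0 <= S -> 0 <= x < x' -> 0 < D ->
  P * (S + x) ^ 2 / D < P * (S + x') ^ 2 / D.
Proof.
  intros. unfold Rdiv. apply Rmult_lt_compat_r; [apply Rinv_0_lt_compat; lra|].
  apply Rmult_lt_compat_l; [lra | nra].
Qed.

(* Clearing denominators, the claim is [P ((2 S x + x^2) T - S^2 y) > 0]. *)
Lemma Rdiv_lt_add_term_sqr (P S T x y : R) :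
  0 < P -> 0 <= S -> 0 < T -> 0 < x -> 0 <= y -> y * S <= 2 * T * x ->
  P * S ^ 2 / T < P * (S + x) ^ 2 / (T + y).
Proof.
  intros HP HS HT Hx Hy HyS. apply Rlt_0_minus.
  replace (P * (S + x) ^ 2 / (T + y) - P * S ^ 2 / T)
    with (P * ((S + x) ^ 2 * T - S ^ 2 * (T + y)) / ((T + y) * T)) by (field; lra).
  apply Rdiv_lt_0_compat; [|nra].
  apply Rmult_lt_0_compat; [lra|].
  assert (S * (y * S) <= S * (2 * T * x)) by (apply Rmult_le_compat_l; lra).
  assert (0 < x * x * T) by (apply Rmult_lt_0_compat; nra).
  nra.
Qed.

Definition set_decision (d : nat -> decision) (k : nat) (e : decision) : nat -> decision :=
  fun j => if Nat.eq_dec j k then e else d j.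

Lemma set_decision_at (d : nat -> decision) (k : nat) (e : decision) :
  set_decision d k e k = e.
Proof. unfold set_decision. destruct (Nat.eq_dec k k); congruence. Qed.

Lemma rsum_drop_at_set_decision (K k : nat) (F : nat -> decision -> R)
    (d : nat -> decision) (e : decision) :
  rsum K (drop_at k (fun j => F j (set_decision d k e j)))
  = rsum K (drop_at k (fun j => F j (d j))).
Proof.
  apply rsum_drop_at_ext. intros j Hjk. unfold set_decision.
  destruct (Nat.eq_dec j k); [contradiction | reflexivity].
Qed.

Section Relay.

Variables eta1 P sb2 : R.
Hypotheses (eta1_gt0 : 0 < eta1) (P_gt0 : 0 < P) (sb2_gt0 : 0 < sb2).

Definition beam_term (h g : C) (e : decision) : R :=
  amp_gain eta1 P sb2 h e * Cmod (h * g) * sqrt (lamI e).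

Definition noise_term (h g : C) (e : decision) : R :=
  amp_gain eta1 P sb2 h e ^ 2 * Cmod g ^ 2 * sb2.

Lemma beam_term_ge0 (h g : C) (e : decision) : 0 <= beam_term h g e.
Proof.
  unfold beam_term, amp_gain.
  apply Rmult_le_pos; [apply Rmult_le_pos|]; auto using sqrt_pos, Cmod_ge_0.
Qed.

Lemma noise_term_ge0 (h g : C) (e : decision) : 0 <= noise_term h g e.
Proof.
  unfold noise_term. apply Rmult_le_pos; [apply Rmult_le_pos|]; auto using pow2_ge_0; lra.
Qed.

Lemma SNR_at (K k : nat) (sD2 : R) (h g : nat -> C) (d : nat -> decision) :
  (k < K)%nat ->
  SNR K P eta1 sb2 sD2 h g d =
  P * (rsum K (drop_at k (fun j => beam_term (h j) (g j) (d j)))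
       + beam_term (h k) (g k) (d k)) ^ 2
  / (rsum K (drop_at k (fun j => noise_term (h j) (g j) (d j)))
     + noise_term (h k) (g k) (d k) + sD2).
Proof.
  intros Hk. unfold SNR.
  rewrite (rsum_drop_at K k _ Hk), (rsum_drop_at K k (fun j => _ ^ 2 * _ * _) Hk).
  reflexivity.
Qed.

Lemma SNR_set_decision (K k : nat) (sD2 : R) (h g : nat -> C) (d : nat -> decision)
    (e : decision) :
  (k < K)%nat ->
  SNR K P eta1 sb2 sD2 h g (set_decision d k e) =
  P * (rsum K (drop_at k (fun j => beam_term (h j) (g j) (d j)))
       + beam_term (h k) (g k) e) ^ 2
  / (rsum K (drop_at k (fun j => noise_term (h j) (g j) (d j)))
     + noise_term (h k) (g k) e + sD2).
Proof.
  intros Hk. rewrite (SNR_at K k) by exact Hk. rewrite set_decision_at.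
  rewrite (rsum_drop_at_set_decision K k (fun j => beam_term (h j) (g j))).
  rewrite (rsum_drop_at_set_decision K k (fun j => noise_term (h j) (g j))).
  reflexivity.
Qed.

Lemma SNR_ge0 (K : nat) (sD2 : R) (h g : nat -> C) (d : nat -> decision) :
  0 < sD2 -> 0 <= SNR K P eta1 sb2 sD2 h g d.
Proof.
  intros HsD2. unfold SNR.
  assert (0 <= rsum K (fun j => noise_term (h j) (g j) (d j)))
    by (apply rsum_nonneg; intros; apply noise_term_ge0).
  unfold noise_term in *.
  apply Rmult_le_pos; [apply Rmult_le_pos; [lra | apply pow2_ge_0]|].
  apply Rlt_le, Rinv_0_lt_compat. lra.
Qed.

Lemma amp_gain_no_forwarding (h : C) (e : decision) :
  lamF e = 0 -> bF e = 0 -> amp_gain eta1 P sb2 h e = 0.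
Proof.
  intros HF HbF. unfold amp_gain, relay_power. rewrite HF, HbF.
  replace (eta1 * 0 * P * Cmod h ^ 2 + 0) with 0 by ring.
  unfold Rdiv. rewrite Rmult_0_l. apply sqrt_0.
Qed.

Lemma amp_gain_gt0 (h : C) (e : decision) :
  0 < Cmod h -> 0 < lamF e -> 0 <= lamI e -> 0 <= bF e -> 0 < amp_gain eta1 P sb2 h e.
Proof.
  intros Hh HF HI HbF. unfold amp_gain, relay_power. apply sqrt_lt_R0.
  assert (0 < Cmod h ^ 2) by (apply pow_lt; lra).
  assert (0 < eta1 * lamF e * P * Cmod h ^ 2) by (repeat apply Rmult_lt_0_compat; lra).
  assert (0 <= lamI e * P * Cmod h ^ 2) by (repeat apply Rmult_le_pos; lra).
  apply Rdiv_lt_0_compat; lra.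
Qed.

Lemma beam_term_lt (h g : C) (e e' : decision) :
  0 < Cmod h -> 0 < Cmod g -> 0 < lamF e -> 0 <= lamI e -> 0 <= bF e ->
  amp_gain eta1 P sb2 h e' = amp_gain eta1 P sb2 h e -> lamI e < lamI e' ->
  beam_term h g e < beam_term h g e'.
Proof.
  intros Hh Hg HF HI HbF Hamp HIlt. unfold beam_term. rewrite Hamp.
  apply Rmult_lt_compat_l; [|apply sqrt_lt_1; lra].
  apply Rmult_lt_0_compat; [apply amp_gain_gt0; lra|].
  rewrite Cmod_mult. apply Rmult_lt_0_compat; lra.
Qed.

(* With [r = lamF / (lamI Q + sb2)], [Q = P |h|^2], the gain is
   [beta^2 = eta1 Q r]; moving [lamB / (1 + r Q)] to [lamI] and the rest to
   [lamF] keeps [r], hence [beta], fixed. *)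
Lemma battery_share_to_info (h : C) (e : decision) :
  feasible 0 e -> 0 < lamB e ->
  exists e', feasible 0 e' /\
    amp_gain eta1 P sb2 h e' = amp_gain eta1 P sb2 h e /\ lamI e < lamI e'.
Proof.
  intros (HI & HF & HB & Hsum & HbF) HBpos.
  assert (HbF0 : bF e = 0) by lra.
  set (Q := P * Cmod h ^ 2).
  assert (HQ : 0 <= Q) by (apply Rmult_le_pos; [lra | apply pow2_ge_0]).
  assert (Hden : 0 < lamI e * Q + sb2)
    by (assert (0 <= lamI e * Q) by (apply Rmult_le_pos; lra); lra).
  set (r := lamF e / (lamI e * Q + sb2)).
  assert (Hr : 0 <= r) by (apply Rdiv_le_0_compat; lra).
  assert (HrQ : 0 <= r * Q) by (apply Rmult_le_pos; lra).
  set (u' := lamI e + lamB e / (1 + r * Q)).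
  assert (Hshift : 0 < lamB e / (1 + r * Q)) by (apply Rdiv_lt_0_compat; lra).
  assert (Hden' : 0 < u' * Q + sb2)
    by (assert (0 <= u' * Q) by (apply Rmult_le_pos; unfold u'; lra); lra).
  exists (mkDecision u' (r * (u' * Q + sb2)) 0 0). simpl.
  split; [|split; [|unfold u'; lra]].
  - assert (Hfill : u' + r * (u' * Q + sb2) = 1).
    { replace (u' + r * (u' * Q + sb2))
        with (lamI e + lamB e / (1 + r * Q) * (1 + r * Q) + r * (lamI e * Q + sb2))
        by (unfold u'; ring).
      assert (lamB e / (1 + r * Q) * (1 + r * Q) = lamB e) by (field; lra).
      assert (r * (lamI e * Q + sb2) = lamF e) by (unfold r; field; lra).
      lra. }
    assert (0 <= r * (u' * Q + sb2)) by (apply Rmult_le_pos; lra).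
    unfold feasible; simpl. repeat split; unfold u' in *; lra.
  - unfold amp_gain, relay_power. cbn [lamI lamF bF]. rewrite HbF0. f_equal.
    replace (u' * P * Cmod h ^ 2) with (u' * Q) by (unfold Q; ring).
    replace (lamI e * P * Cmod h ^ 2) with (lamI e * Q) by (unfold Q; ring).
    unfold r. field. lra.
Qed.

Lemma amp_gain_sqr_le (h : C) (e : decision) :
  0 <= lamI e -> 0 <= lamF e -> 0 <= bF e ->
  amp_gain eta1 P sb2 h e ^ 2 <= relay_power eta1 P h e / sb2.
Proof.
  intros HI HF HbF.
  assert (Hpow : 0 <= relay_power eta1 P h e).
  { unfold relay_power.
    assert (0 <= eta1 * lamF e * P * Cmod h ^ 2)
      by (apply Rmult_le_pos; [repeat apply Rmult_le_pos | apply pow2_ge_0]; lra).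
    lra. }
  assert (0 <= lamI e * P * Cmod h ^ 2)
    by (apply Rmult_le_pos; [apply Rmult_le_pos | apply pow2_ge_0]; lra).
  unfold amp_gain. rewrite pow2_sqrt by (apply Rdiv_le_0_compat; lra).
  unfold Rdiv. apply Rmult_le_compat_l; [lra|].
  apply Rinv_le_contravar; lra.
Qed.

(* A relay contributing nothing can start forwarding a share [v] with
   [v c <= T^2], [c = eta1 P |g|^2 sb2 S^2]: as [beta^2 <= eta1 v P |h|^2 / sb2],
   the new noise stays below [2 T] times the new beam term. *)
Lemma share_below (T c : R) :
  0 < T -> 0 <= c -> exists v, 0 < v <= / 2 /\ v * c <= T ^ 2.
Proof.
  intros HT Hc.
  assert (HT2 : 0 < T ^ 2) by (apply pow_lt; lra).
  exists (T ^ 2 / (2 * T ^ 2 + c)).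
  assert (Hvc : T ^ 2 / (2 * T ^ 2 + c) * (2 * T ^ 2 + c) = T ^ 2) by (field; lra).
  assert (0 < T ^ 2 / (2 * T ^ 2 + c)) by (apply Rdiv_lt_0_compat; lra).
  nra.
Qed.

Lemma small_forwarding (h g : C) (S T : R) :
  0 < Cmod h -> 0 < Cmod g -> 0 <= S -> 0 < T ->
  exists e, feasible 0 e /\ 0 < beam_term h g e /\
    noise_term h g e * S <= 2 * T * beam_term h g e.
Proof.
  intros Hh Hg HS HT.
  set (c := eta1 * P * Cmod g ^ 2 * sb2 * S ^ 2).
  assert (Hc : 0 <= c) by (unfold c; repeat apply Rmult_le_pos; auto using pow2_ge_0; lra).
  destruct (share_below T c HT Hc) as (v & Hv & Hvc).
  set (e := mkDecision (/ 2) v (/ 2 - v) 0).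
  assert (Hfe : feasible 0 e) by (unfold feasible, e; simpl; repeat split; lra).
  set (beta := amp_gain eta1 P sb2 h e).
  assert (Hbeta : 0 < beta) by (apply amp_gain_gt0; simpl; lra).
  assert (Hbeta2 : beta ^ 2 <= eta1 * v * P * Cmod h ^ 2 / sb2).
  { replace (eta1 * v * P * Cmod h ^ 2) with (relay_power eta1 P h e)
      by (unfold relay_power, e; simpl lamF; simpl bF; ring).
    apply amp_gain_sqr_le; simpl; lra. }
  set (s := sqrt (/ 2)).
  assert (Hs : 0 < s) by (apply sqrt_lt_R0; lra).
  assert (Hs2 : s ^ 2 = / 2) by (apply pow2_sqrt; lra).
  assert (Hh2 : 0 < Cmod h ^ 2) by (apply pow_lt; lra).
  assert (Hsq : (beta * Cmod g * sb2 * S) ^ 2 <= (2 * T * Cmod h * s) ^ 2).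
  { replace ((2 * T * Cmod h * s) ^ 2) with (4 * T ^ 2 * Cmod h ^ 2 * s ^ 2) by ring.
    rewrite Hs2.
    apply Rle_trans with (Cmod h ^ 2 * (v * c)); [|nra].
    replace ((beta * Cmod g * sb2 * S) ^ 2)
      with (beta ^ 2 * (Cmod g ^ 2 * sb2 ^ 2 * S ^ 2)) by ring.
    replace (Cmod h ^ 2 * (v * c))
      with (eta1 * v * P * Cmod h ^ 2 / sb2 * (Cmod g ^ 2 * sb2 ^ 2 * S ^ 2))
      by (unfold c; field; lra).
    apply Rmult_le_compat_r; [|exact Hbeta2].
    apply Rmult_le_pos; [apply Rmult_le_pos|]; apply pow2_ge_0. }
  assert (Hkey : beta * Cmod g * sb2 * S <= 2 * T * Cmod h * s).
  { assert (0 <= beta * Cmod g * sb2 * S) by (repeat apply Rmult_le_pos; lra).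
    assert (0 < 2 * T * Cmod h * s) by (repeat apply Rmult_lt_0_compat; lra).
    nra. }
  exists e. unfold beam_term, noise_term. fold beta. rewrite Cmod_mult.
  cbn [lamI e]. fold s.
  split; [exact Hfe | split].
  - repeat apply Rmult_lt_0_compat; lra.
  - replace (beta ^ 2 * Cmod g ^ 2 * sb2 * S)
      with (beta * Cmod g * (beta * Cmod g * sb2 * S)) by ring.
    replace (2 * T * (beta * (Cmod h * Cmod g) * s))
      with (beta * Cmod g * (2 * T * Cmod h * s)) by ring.
    apply Rmult_le_compat_l; [apply Rmult_le_pos|]; lra.
Qed.

Lemma SNR_improvable (K k : nat) (sD2 : R) (h g : nat -> C) (d : nat -> decision) :
  0 < sD2 -> (k < K)%nat -> h k <> 0%C -> g k <> 0%C ->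
  feasible 0 (d k) -> 0 < lamB (d k) ->
  exists e, feasible 0 e /\
    SNR K P eta1 sb2 sD2 h g d < SNR K P eta1 sb2 sD2 h g (set_decision d k e).
Proof.
  intros HsD2 Hk Hh Hg Hfe HB.
  apply Cmod_gt_0 in Hh, Hg.
  set (S := rsum K (drop_at k (fun j => beam_term (h j) (g j) (d j)))).
  set (T := rsum K (drop_at k (fun j => noise_term (h j) (g j) (d j)))).
  assert (HS : 0 <= S) by (apply rsum_drop_at_nonneg; intros; apply beam_term_ge0).
  assert (HT : 0 <= T) by (apply rsum_drop_at_nonneg; intros; apply noise_term_ge0).
  rewrite (SNR_at K k) by exact Hk. fold S T.
  destruct Hfe as (HI & HF & HB0 & Hsum & HbF).
  destruct (Req_dec (lamF (d k)) 0) as [HF0 | HFpos].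
  - assert (Hamp : amp_gain eta1 P sb2 (h k) (d k) = 0)
      by (apply amp_gain_no_forwarding; lra).
    assert (Hbeam : beam_term (h k) (g k) (d k) = 0)
      by (unfold beam_term; rewrite Hamp; ring).
    assert (Hnoise : noise_term (h k) (g k) (d k) = 0)
      by (unfold noise_term; rewrite Hamp; ring).
    destruct (small_forwarding (h k) (g k) S (T + sD2)) as (e & Hfe & Hx & Hy);
      try lra.
    exists e. split; [exact Hfe|].
    rewrite SNR_set_decision by exact Hk. fold S T. rewrite Hbeam, Hnoise, !Rplus_0_r.
    replace (T + noise_term (h k) (g k) e + sD2)
      with (T + sD2 + noise_term (h k) (g k) e) by ring.
    apply Rdiv_lt_add_term_sqr; auto using noise_term_ge0; lra.
  - destruct (battery_share_to_info (h k) (d k)) as (e & Hfe & Hamp & HIlt);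
      [repeat split; lra | lra |].
    exists e. split; [exact Hfe|].
    rewrite SNR_set_decision by exact Hk. fold S T.
    replace (noise_term (h k) (g k) e) with (noise_term (h k) (g k) (d k))
      by (unfold noise_term; rewrite Hamp; reflexivity).
    assert (0 <= noise_term (h k) (g k) (d k)) by apply noise_term_ge0.
    apply Rdiv_lt_num_sqr; auto using beam_term_ge0; [|lra].
    split; [apply beam_term_ge0 | apply beam_term_lt; lra].
Qed.

Lemma greedy_slot_empty (K : nat) (sD2 : R) (h g : nat -> C) (d : nat -> decision)
    (Bt : nat -> R) :
  0 < sD2 -> (forall j, (j < K)%nat -> h j <> 0%C /\ g j <> 0%C) ->
  (forall j, (j < K)%nat -> Bt j = 0) ->
  (forall j, (j < K)%nat -> feasible (Bt j) (d j)) ->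
  (forall d' : nat -> decision, (forall j, (j < K)%nat -> feasible (Bt j) (d' j)) ->
     rate K P eta1 sb2 sD2 h g d' <= rate K P eta1 sb2 sD2 h g d) ->
  forall k, (k < K)%nat -> lamB (d k) = 0 /\ bF (d k) = 0.
Proof.
  intros HsD2 Hhg HB Hfe Hopt k Hk.
  assert (Hfe0 : forall j, (j < K)%nat -> feasible 0 (d j))
    by (intros j Hj; rewrite <- (HB j Hj); auto).
  destruct (Hfe0 k Hk) as (_ & _ & HBk & _ & HbF).
  split; [|lra].
  destruct (Req_dec (lamB (d k)) 0) as [|HBne]; [assumption | exfalso].
  destruct (Hhg k Hk) as [Hh Hg].
  destruct (SNR_improvable K k sD2 h g d) as (e & He & Hlt); auto; [lra|].
  assert (Hfe' : forall j, (j < K)%nat -> feasible (Bt j) (set_decision d k e j)).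
  { intros j Hj. rewrite (HB j Hj). unfold set_decision.
    destruct (Nat.eq_dec j k); auto. }
  specialize (Hopt _ Hfe'). unfold rate in Hopt.
  pose proof (SNR_ge0 K sD2 h g d HsD2).
  assert (ln (1 + SNR K P eta1 sb2 sD2 h g d)
          < ln (1 + SNR K P eta1 sb2 sD2 h g (set_decision d k e)))
    by (apply ln_increasing; lra).
  lra.
Qed.

End Relay.

Theorem theorem1 (K : nat) (P eta1 eta2 sb2 sD2 : R)
    (h g : nat -> nat -> C) (D : nat -> nat -> decision) (B : nat -> nat -> R) :
  0 < P -> 0 < eta1 <= 1 -> 0 < eta2 <= 1 -> 0 < sb2 -> 0 < sD2 ->
  (forall t k, (1 <= t)%nat -> (k < K)%nat -> h t k <> 0%C /\ g t k <> 0%C) ->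
  (forall k, (k < K)%nat -> B 1%nat k = 0) ->
  greedy_trajectory K P eta1 eta2 sb2 sD2 h g D B ->
  forall t k, (1 <= t)%nat -> (k < K)%nat ->
    lamB (D t k) = 0 /\ bF (D t k) = 0 /\ B t k = 0.
Proof.
  intros HP He1 He2 Hsb2 HsD2 Hhg HB1 [Hnext Hgreedy].
  assert (Hslot : forall t, (1 <= t)%nat -> (forall k, (k < K)%nat -> B t k = 0) ->
            forall k, (k < K)%nat -> lamB (D t k) = 0 /\ bF (D t k) = 0).
  { intros t Ht HB. destruct (Hgreedy t Ht) as [Hfe Hopt].
    apply (greedy_slot_empty eta1 P sb2)
      with (sD2 := sD2) (h := h t) (g := g t) (Bt := B t); auto; lra. }
  assert (Hempty : forall t, (1 <= t)%nat -> forall k, (k < K)%nat -> B t k = 0).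
  { induction t as [|t IH]; intros Ht; [lia|].
    destruct (Nat.eq_dec t 0) as [->|Ht0]; [exact HB1|].
    assert (Ht1 : (1 <= t)%nat) by lia.
    intros k Hk. rewrite (Hnext t k Ht1 Hk).
    destruct (Hslot t Ht1 (IH Ht1) k Hk) as [HB0 HbF0].
    unfold battery_next. rewrite HB0, HbF0, (IH Ht1 k Hk). ring. }
  intros t k Ht Hk.
  destruct (Hslot t Ht (Hempty t Ht) k Hk). auto.
Qed.
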